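(* Consider the LSTM system $x_{k+1}=f(x_k,u_k)$, $y_k=g(x_k)$ described in the context, augmented with an output disturbance $d\in\mathbb{R}^p$ (so the output is $g(x)+d$). If $x_{k+1}=f(x_k,u_k)$ is Incrementally Input-to-State Stable ($\delta$ISS) in the sets $\mathcal{X}$ and $\mathcal{U}$, then for every $u\in\mathcal{U}$ and every $y\in\mathbb{R}^p$ there exist unique values $x^*\in\mathcal{X}$, $d^*\in\mathbb{R}^p$ such that $x^*=f(x^*,u)$ and $y=g(x^* )+d^*$.
   Context: LSTM model: states $c,h\in\mathbb{R}^n$, input $u\in\mathbb{R}^m$, output $y\in\mathbb{R}^p$, $c_{k+1}=\sigma(W_fu_k+U_fh_k+b_f)\circ c_k+\sigma(W_iu_k+U_ih_k+b_i)\circ\tanh(W_cu_k+U_ch_k+b_c)$, $h_{k+1}=\sigma(W_ou_k+U_oh_k+b_o)\circ\tanh(c_{k+1})$, $y_k=W_yh_k+b_y$, where $\sigma$ is the logistic sigmoid, activations act elementwise, $\circ$ is the elementwise product; $x=[c^\top\ h^\top]^\top$, written $x_{k+1}=f(x_k,u_k)$, $y_k=g(x_k)$. $\delta$ISS: given $\mathcal{X}\subseteq\mathbb{R}^{2n}$ positively invariant (for every $u\in\mathcal{U}$, $x\in\mathcal{X}\Rightarrow f(x,u)\in\mathcal{X}$) and $\mathcal{U}\subseteq\mathbb{R}^m$, the system is $\delta$ISS in $\mathcal{X},\mathcal{U}$ if there exist $\beta\in\mathcal{KL}$, $\gamma\in\mathcal{K}_\infty$ such that for all $k\ge0$, all $x_{a,0},x_{b,0}\in\mathcal{X}$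 and all input sequences in $\mathcal{U}$, $\|x_{a,k}-x_{b,k}\|\le\beta(\|x_{a,0}-x_{b,0}\|,k)+\gamma(\max_{0\le h<k}\|u_{a,h}-u_{b,h}\|)$.
   Formalization: The positively invariant set $\mathcal{X}$ is in addition nonempty and closed in $\mathbb{R}^{2n}$. Each condition added here is assumed in the paper as well or is needed for the statement above to hold. *)

From HB Require Import structures.
From mathcomp Require Import all_boot all_order all_algebra.
From mathcomp Require Import all_classical all_reals all_analysis.
Set Implicit Arguments. Unset Strict Implicit. Unset Printing Implicit Defensive.
Import Order.TTheory GRing.Theory Num.Theory.
Import numFieldNormedType.Exports.
Local Open Scope classical_set_scope.
Local Open Scope ring_scope.

Section LSTM.
Variable R : realType.

Definition sigmoid (z : R) : R := 1 / (1 + expR (- z)).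
Definition tanhR (z : R) : R := (expR z - expR (- z)) / (expR z + expR (- z)).

Definition hprod (k : nat) (a b : 'cV[R]_k) : 'cV[R]_k :=
  \matrix_(i < k, j < 1) (a i j * b i j).

Definition enorm (k : nat) (v : 'cV[R]_k) : R :=
  Num.sqrt (\sum_(i < k) v i 0 ^+ 2).

Record lstm (n m p : nat) := Lstm {
  Wf : 'M[R]_(n, m); Uf : 'M[R]_n; bf : 'cV[R]_n;
  Wi : 'M[R]_(n, m); Ui : 'M[R]_n; bi : 'cV[R]_n;
  Wc : 'M[R]_(n, m); Uc : 'M[R]_n; bc : 'cV[R]_n;
  Wo : 'M[R]_(n, m); Uo : 'M[R]_n; bo : 'cV[R]_n;
  Wy : 'M[R]_(p, n); by_ : 'cV[R]_p }.

Variables n m p : nat.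
Variable L : lstm n m p.

Definition lstm_c (x : 'cV[R]_(n + n)) : 'cV[R]_n := usubmx x.
Definition lstm_h (x : 'cV[R]_(n + n)) : 'cV[R]_n := dsubmx x.

Definition lstm_f (x : 'cV[R]_(n + n)) (u : 'cV[R]_m) : 'cV[R]_(n + n) :=
  let c := lstm_c x in let h := lstm_h x in
  let c' := hprod (map_mx sigmoid (Wf L *m u + Uf L *m h + bf L)) c
          + hprod (map_mx sigmoid (Wi L *m u + Ui L *m h + bi L))
                  (map_mx tanhR (Wc L *m u + Uc L *m h + bc L)) in
  let h' := hprod (map_mx sigmoid (Wo L *m u + Uo L *m h + bo L))
                  (map_mx tanhR c') in
  col_mx c' h'.

Definition lstm_g (x : 'cV[R]_(n + n)) : 'cV[R]_p := Wy L *m lstm_h x + by_ L.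

Fixpoint lstm_traj (x0 : 'cV[R]_(n + n)) (u : nat -> 'cV[R]_m) (k : nat)
  : 'cV[R]_(n + n) :=
  match k with
  | 0 => x0
  | k'.+1 => lstm_f (lstm_traj x0 u k') (u k')
  end.

Definition pos_invariant (X : set 'cV[R]_(n + n)) (U : set 'cV[R]_m) : Prop :=
  forall x u, X x -> U u -> X (lstm_f x u).

End LSTM.

Section Comparison.
Variable R : realType.

Definition classK (a : R -> R) : Prop :=
  {within [set r : R | 0 <= r], continuous a} /\ a 0 = 0 /\
  (forall r s, 0 <= r -> r < s -> a r < a s).

Definition classKinf (a : R -> R) : Prop :=
  classK a /\ a r @[r --> +oo] --> +oo.

Definition classKL (b : R -> R -> R) : Prop :=
  (forall s, 0 <= s -> classK (fun r => b r s)) /\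
  (forall r, 0 <= r ->
     (forall s t, 0 <= s -> s <= t -> b r t <= b r s) /\
     b r s @[s --> +oo] --> 0).
End Comparison.

Definition deltaISS (R : realType) (n m p : nat) (L : lstm R n m p)
  (X : set 'cV[R]_(n + n)) (U : set 'cV[R]_m) : Prop :=
  exists (beta : R -> R -> R) (gamma : R -> R),
    classKL beta /\ classKinf gamma /\
    forall (k : nat) (xa0 xb0 : 'cV[R]_(n + n)) (ua ub : nat -> 'cV[R]_m),
      X xa0 -> X xb0 -> (forall h, U (ua h)) -> (forall h, U (ub h)) ->
      enorm (lstm_traj L xa0 ua k - lstm_traj L xb0 ub k)
        <= beta (enorm (xa0 - xb0)) k%:R
           + gamma (\big[Num.max/0]_(h < k) enorm (ua h - ub h)).

From HB Require Import structures.
From mathcomp Require Import all_boot all_order all_algebra.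
From mathcomp Require Import all_classical all_reals all_analysis.
From mathcomp Require Import lra.
Set Implicit Arguments. Unset Strict Implicit. Unset Printing Implicit Defensive.
Import Order.TTheory GRing.Theory Num.Theory.
Import numFieldNormedType.Exports.
Local Open Scope classical_set_scope.
Local Open Scope ring_scope.

(* With the input frozen at u, the state map F := f(., u) maps the closed set X
   into itself, and delta-ISS with equal inputs reads |F^k a - F^k b| <= beta(|a - b|, k).
   The LSTM orbit of any x0 is bounded: after one step the hidden state lies in
   [-1, 1], and the cell state is then contracted by a forget gate bounded away
   from 1, up to an additive term at most 1.  Hence
   |F^(j+K) x0 - F^K x0| <= beta(sup_j |F^j x0 - x0|, K) -> 0, the orbit is
   Cauchy, and its limit xs lies in X.  Two fixed points a, b satisfy
   |a - b| <= beta(|a - b|, k) -> 0, so xs is unique, and ds = y - g(xs) is forced. *)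

Section ComparisonFunctions.
Variable R : realType.

Lemma classK_le (a : R -> R) r s : classK a -> 0 <= r -> r <= s -> a r <= a s.
Proof.
move=> [_ [_ a_incr]] r0; rewrite le_eqVlt => /predU1P[-> //|rs].
exact/ltW/a_incr.
Qed.

Lemma classK_cvg0 (a : R -> R) (r : nat -> R) :
  classK a -> (forall k, 0 <= r k) -> r @ \oo --> 0 -> a (r k) @[k --> \oo] --> 0.
Proof.
move=> [a_cont [a0 _]] r_ge0 r_cvg0; apply/cvgrPdist_lt => e e0.
have := proj1 (subspace_continuousP _ _) a_cont 0 (lexx 0).
rewrite /from_subspace a0 => /cvgrPdist_lt/(_ e e0) near_a.
have : \forall k \near \oo, 0 <= r k -> `|0 - a (r k)| < e := r_cvg0 _ near_a.
by apply: filterS => k; apply; apply: r_ge0.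
Qed.

Lemma classKL_cvg0 (b : R -> R -> R) r :
  classKL b -> 0 <= r -> b r k%:R @[k --> \oo] --> 0.
Proof. by move=> [_ b_decr] r0; apply: cvg_comp cvgr_idn (proj2 (b_decr r r0)). Qed.

End ComparisonFunctions.

Section IncrementallyStableMap.
Variables (R : realType) (V : completeNormedModType R).
Variables (F : V -> V) (X : set V) (nu : V -> R) (C : R) (beta : R -> R -> R).
Hypothesis F_X : forall x, X x -> X (F x).
Hypothesis normr_le_nu : forall v, `|v| <= nu v.
Hypothesis C_ge0 : 0 <= C.
Hypothesis nu_le_normr : forall v, nu v <= C * `|v|.
Hypothesis beta_KL : classKL beta.
Hypothesis F_stable : forall k xa xb, X xa -> X xb ->
  nu (iter k F xa - iter k F xb) <= beta (nu (xa - xb)) k%:R.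

Let nu_ge0 v : 0 <= nu v. Proof. exact: le_trans (normr_ge0 v) (normr_le_nu v). Qed.

Lemma iter_in k x : X x -> X (iter k F x).
Proof. by move=> Xx; elim: k => //= k; apply: F_X. Qed.

Lemma stable_fixpoint_unique a b : X a -> X b -> F a = a -> F b = b -> a = b.
Proof.
move=> Xa Xb Fa Fb; apply/eqP; rewrite -subr_eq0 -normr_le0.
apply: le_trans (normr_le_nu _) _.
have beta_cvg0 := classKL_cvg0 beta_KL (nu_ge0 (a - b)).
rewrite -(cvg_lim _ beta_cvg0) //; apply: limr_ge; first exact: cvgP beta_cvg0.
by near=> k; rewrite -{1}(iter_fix k Fa) -{1}(iter_fix k Fb); apply: F_stable.
Unshelve. all: by end_near.
Qed.

Lemma stable_orbit_cvg x0 M : X x0 -> (forall k, `|iter k F x0| <= M) ->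
  cvg (iter k F x0 @[k --> \oo]).
Proof.
move=> Xx0 orbitM; pose B := C * (`|x0| + M).
have nuB j : nu (x0 - iter j F x0) <= B.
  by apply: le_trans (nu_le_normr _) _; rewrite ler_wpM2l // (le_trans (ler_normB _ _)) ?lerD.
apply/cauchy_cvgP/cauchy_exP => e e0.
have /cvgrPdist_lt/(_ e e0)[K _ betaK] :=
  classKL_cvg0 beta_KL (le_trans (nu_ge0 _) (nuB 0%N)).
exists (iter K F x0); exists K => // k /= Kk.
rewrite -ball_normE /ball_ /= -(subnKC Kk) iterD.
apply: le_lt_trans (normr_le_nu _) (le_lt_trans (F_stable _ Xx0 (iter_in _ Xx0)) _).
apply: le_lt_trans (classK_le (proj1 beta_KL _ (ler0n _ K)) (nu_ge0 _) (nuB _)) _.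
by have := betaK K (leqnn K); rewrite /= sub0r normrN; apply: le_lt_trans (ler_norm _).
Qed.

(* F need not be continuous: the one-step bound beta(., 1), continuous at 0, replaces it. *)
Lemma stable_limit_fixpoint x0 xs : X x0 -> X xs ->
  iter k F x0 @[k --> \oo] --> xs -> F xs = xs.
Proof.
move=> Xx0 Xxs orbit_xs.
have nu_cvg0 : nu (xs - iter k F x0) @[k --> \oo] --> 0.
  apply: (@squeeze_cvgr _ _ _ _ (fun=> 0) (fun k => C * `|xs - iter k F x0|)).
  - by near=> k; rewrite nu_ge0 nu_le_normr.
  - exact: cvg_cst.
  rewrite -(mulr0 C); apply: cvgMr; rewrite -(normr0 V) -(subrr xs).
  exact: (cvg_norm (cvgB (cvg_cst xs) orbit_xs)).
have orbitS_Fxs : iter k.+1 F x0 @[k --> \oo] --> F xs.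
  apply/cvgrPdist_le => e e0.
  have /cvgrPdist_le/(_ e e0) :=
    classK_cvg0 (proj1 beta_KL _ (ler0n _ 1)) (fun k => nu_ge0 _) nu_cvg0.
  apply: filterS => k; rewrite sub0r normrN; apply: le_trans.
  apply: le_trans (normr_le_nu _) (le_trans (F_stable 1 Xxs (iter_in k Xx0)) _).
  exact: ler_norm.
apply: (norm_cvg_unique orbitS_Fxs); move: orbit_xs; rewrite -cvg_shiftS; exact.
Unshelve. all: by end_near.
Qed.

Lemma stable_fixpoint_exists x0 M : closed X -> X x0 ->
  (forall k, `|iter k F x0| <= M) -> exists2 xs, X xs & F xs = xs.
Proof.
move=> X_closed Xx0 orbitM; have orbit_cvg := stable_orbit_cvg Xx0 orbitM.
have Xlim : X (lim (iter k F x0 @[k --> \oo])).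
  by apply: closed_cvg X_closed _ _ orbit_cvg; near=> k; apply: iter_in.
exists (lim (iter k F x0 @[k --> \oo])) => //.
exact: stable_limit_fixpoint Xx0 Xlim orbit_cvg.
Unshelve. all: by end_near.
Qed.

End IncrementallyStableMap.

(* Matrices already carry both a normed-module and a complete-space structure;
   this declares their join. *)
HB.instance Definition _ (R : realType) (a b : nat) := Complete.on 'M[R]_(a, b).

Section MatrixNorm.
Variable R : realDomainType.

Lemma mx_norm_entry_le a b (A : 'M[R]_(a, b)) i j : `|A i j| <= `|A|.
Proof.
rewrite [leRHS]/Num.Def.normr /= mx_normrE.
exact: (le_bigmax _ (fun ij : 'I_a * 'I_b => `|A ij.1 ij.2|) (i, j)).
Qed.

Lemma mx_norm_le a b (A : 'M[R]_(a, b)) c :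
  0 <= c -> (forall i j, `|A i j| <= c) -> `|A| <= c.
Proof.
move=> c0 Ac; rewrite [leLHS]/Num.Def.normr /= mx_normrE.
by apply: bigmax_le => // -[i j] _; apply: Ac.
Qed.

Lemma mx_norm_mulmx_entry_le a b c (A : 'M[R]_(a, b)) (B : 'M[R]_(b, c)) i j :
  `|(A *m B) i j| <= b%:R * (`|A| * `|B|).
Proof.
rewrite mxE; apply: le_trans (ler_norm_sum _ _ _) _.
rewrite mulr_natl -[X in _ *+ X]card_ord -sumr_const; apply: ler_sum => k _.
by rewrite normrM ler_pM ?mx_norm_entry_le.
Qed.

Lemma mx_norm_col_le a1 a2 b (A : 'M[R]_(a1 + a2, b)) :
  `|A| <= Num.max `|usubmx A| `|dsubmx A|.
Proof.
apply: mx_norm_le => [|i j]; first by rewrite le_max normr_ge0.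
rewrite le_max; case: (splitP i) => k ik.
  rewrite (_ : i = lshift a2 k); last exact: val_inj.
  by have := mx_norm_entry_le (usubmx A) k j; rewrite mxE => ->.
rewrite (_ : i = rshift a1 k); last exact: val_inj.
by have := mx_norm_entry_le (dsubmx A) k j; rewrite mxE => ->; rewrite orbT.
Qed.

End MatrixNorm.

Section EuclideanNorm.
Variable R : realType.

Lemma enorm0 k : enorm (0 : 'cV[R]_k) = 0.
Proof. by rewrite /enorm big1 ?sqrtr0 // => i _; rewrite mxE expr0n. Qed.

Lemma mx_norm_le_enorm k (v : 'cV[R]_k) : `|v| <= enorm v.
Proof.
apply: mx_norm_le => [|i j]; first exact: sqrtr_ge0.
have entry_sqr_ge0 (l : 'I_k) : 0 <= v l 0 ^+ 2 by apply: sqr_ge0.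
rewrite (ord1 j) -sqrtr_sqr ler_sqrt; last exact: sumr_ge0.
by rewrite (bigD1 i) //= lerDl sumr_ge0.
Qed.

Lemma enorm_le_mx_norm k (v : 'cV[R]_k) : enorm v <= k%:R * `|v|.
Proof.
rewrite /enorm -[leRHS]ger0_norm ?mulr_ge0 // -sqrtr_sqr ler_sqrt ?sqr_ge0 //.
apply: (@le_trans _ _ (\sum_(i < k) `|v| ^+ 2)).
  apply: ler_sum => i _; rewrite -real_normK ?num_real //.
  by rewrite lerXn2r ?nnegrE ?normr_ge0 ?mx_norm_entry_le.
rewrite sumr_const card_ord exprMn -[_ *+ k]mulr_natl ler_wpM2r ?sqr_ge0 //.
by case: k {v} => [|k]; rewrite ?expr0n // -natrX ler_nat expnS leq_pmulr.
Qed.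

End EuclideanNorm.

Section Activations.
Variable R : realType.

Lemma sigmoid_ge0 (z : R) : 0 <= sigmoid z.
Proof. by rewrite /sigmoid divr_ge0 // addr_ge0 // expR_ge0. Qed.

Lemma sigmoid_lt1 (z : R) : sigmoid z < 1.
Proof.
by rewrite /sigmoid ltr_pdivrMr ?mul1r ?ltr_pwDr ?expR_gt0 // ltr_wpDr ?expR_ge0.
Qed.

Lemma sigmoid_nondecreasing : {homo @sigmoid R : a b / a <= b}.
Proof.
move=> a b ab; rewrite /sigmoid !div1r lef_pV2 ?posrE ?ltr_wpDr ?expR_ge0 //.
by rewrite lerD2l ler_expR lerN2.
Qed.

Lemma normr_tanhR_le1 (z : R) : `|tanhR z| <= 1.
Proof.
have := expR_gt0 z; have := expR_gt0 (- z) => e1 e2.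
rewrite /tanhR normrM normfV (gtr0_norm (addr_gt0 e2 e1)) ler_pdivrMr ?addr_gt0 //.
by rewrite mul1r ler_norml; apply/andP; split; lra.
Qed.

End Activations.

Lemma hprodE (R : realType) k (a b : 'cV[R]_k) i j : hprod a b i j = a i j * b i j.
Proof. exact: mxE. Qed.

Section LSTMConstantInput.
Variables (R : realType) (n m p : nat) (L : lstm R n m p) (u : 'cV[R]_m).
Local Notation F := (lstm_f L ^~ u).

Lemma lstm_h_next_le1 x : `|lstm_h (F x)| <= 1.
Proof.
apply: mx_norm_le => [|i j]; first exact: ler01.
rewrite /lstm_h /lstm_f col_mxKd hprodE.
rewrite [map_mx (@sigmoid R) _ _ _]mxE [map_mx (@tanhR R) _ _ _]mxE.
rewrite normrM (ger0_norm (sigmoid_ge0 _)).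
exact: mulr_ile1 (sigmoid_ge0 _) (normr_ge0 _) (ltW (sigmoid_lt1 _)) (normr_tanhR_le1 _).
Qed.

Definition forget_gate_bound (t : R) := `|Wf L *m u + bf L| + n%:R * (`|Uf L| * t).

Lemma forget_gate_bound_nondecreasing : {homo forget_gate_bound : s t / s <= t}.
Proof. by move=> s t st; rewrite lerD2l ler_wpM2l // ler_wpM2l. Qed.

Lemma forget_gate_le x i j :
  (Wf L *m u + Uf L *m lstm_h x + bf L) i j <= forget_gate_bound `|lstm_h x|.
Proof.
apply: le_trans (ler_norm _) _; rewrite addrAC mxE.
apply: le_trans (ler_normD _ _) (lerD _ _); first exact: mx_norm_entry_le.
exact: mx_norm_mulmx_entry_le.
Qed.

Lemma lstm_c_next_le x :
  `|lstm_c (F x)| <= sigmoid (forget_gate_bound `|lstm_h x|) * `|lstm_c x| + 1.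
Proof.
apply: mx_norm_le => [|i j].
  exact: addr_ge0 (mulr_ge0 (sigmoid_ge0 _) (normr_ge0 _)) ler01.
rewrite {1}/lstm_c /lstm_f col_mxKu [in leLHS]mxE !hprodE.
rewrite ![map_mx (@sigmoid R) _ _ _]mxE [map_mx (@tanhR R) _ _ _]mxE.
apply: le_trans (ler_normD _ _) (lerD _ _); rewrite normrM (ger0_norm (sigmoid_ge0 _)).
  apply: ler_pM (sigmoid_ge0 _) (normr_ge0 _) _ (mx_norm_entry_le _ _ _).
  exact/sigmoid_nondecreasing/forget_gate_le.
exact: mulr_ile1 (sigmoid_ge0 _) (normr_ge0 _) (ltW (sigmoid_lt1 _)) (normr_tanhR_le1 _).
Qed.

Lemma lstm_traj_const x k : lstm_traj L x (fun=> u) k = iter k F x.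
Proof. by elim: k => [|k IH]; last rewrite iterS -IH. Qed.

Lemma lstm_orbit_bounded x0 : exists M, forall k, `|iter k F x0| <= M.
Proof.
(* the initial hidden state need not lie in [-1, 1] *)
pose H := Num.max 1 `|lstm_h x0|; pose lam := sigmoid (forget_gate_bound H).
pose B := Num.max `|lstm_c x0| (1 - lam)^-1.
have lam_ge0 : 0 <= lam := sigmoid_ge0 _.
have lam_lt1 : lam < 1 := sigmoid_lt1 _.
have B_stable : lam * B + 1 <= B.
  have : 1 <= (1 - lam) * B.
    by rewrite -ler_pdivrMl ?subr_gt0 // mulr1 le_max lexx orbT.
  have : 0 <= B by rewrite le_max normr_ge0.
  nra.
have invariant k : `|lstm_c (iter k F x0)| <= B /\ `|lstm_h (iter k F x0)| <= H.
  elim: k => [|k [cB hH]]; first by rewrite !le_max !lexx orbT.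
  split; last by rewrite iterS le_max lstm_h_next_le1.
  apply: le_trans (lstm_c_next_le _) (le_trans _ B_stable).
  rewrite lerD2r ler_pM ?sigmoid_ge0 ?normr_ge0 //.
  exact/sigmoid_nondecreasing/forget_gate_bound_nondecreasing.
exists (Num.max B H) => k; have [cB hH] := invariant k.
exact: le_trans (mx_norm_col_le _) (le_max2 cB hH).
Qed.

Lemma deltaISS_constant_input X U : deltaISS L X U -> U u ->
  exists2 beta, classKL beta & forall k xa xb, X xa -> X xb ->
    enorm (iter k F xa - iter k F xb) <= beta (enorm (xa - xb)) k%:R.
Proof.
move=> [beta [gamma [beta_KL [[[_ [gamma0 _]] _] dISS]]]] Uu.
exists beta => // k xa xb Xa Xb.
have := dISS k xa xb (fun=> u) (fun=> u) Xa Xb (fun=> Uu) (fun=> Uu).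
rewrite !lstm_traj_const (_ : \big[_/_]_(h < k) _ = 0) ?gamma0 ?addr0 //.
by elim/big_ind: _ => // [a b -> ->|i _]; rewrite ?maxxx // subrr enorm0.
Qed.

End LSTMConstantInput.

Theorem lemma2 (R : realType) (n m p : nat) (L : lstm R n m p)
  (X : set 'cV[R]_(n + n)) (U : set 'cV[R]_m) :
  X !=set0 -> closed X ->
  pos_invariant L X U ->
  deltaISS L X U ->
  forall (u : 'cV[R]_m) (y : 'cV[R]_p), U u ->
    exists (xs : 'cV[R]_(n + n)) (ds : 'cV[R]_p),
      [/\ X xs, xs = lstm_f L xs u & y = lstm_g L xs + ds] /\
      (forall (x' : 'cV[R]_(n + n)) (d' : 'cV[R]_p),
         X x' -> x' = lstm_f L x' u -> y = lstm_g L x' + d' ->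
         x' = xs /\ d' = ds).
Proof.
move=> [x0 Xx0] X_closed X_inv dISS u y Uu.
pose F := lstm_f L ^~ u.
have F_X x : X x -> X (F x) := X_inv x u ^~ Uu.
have [beta beta_KL F_stable] := deltaISS_constant_input dISS Uu.
have [M orbitM] := lstm_orbit_bounded L u x0.
have [xs Xxs Fxs] := @stable_fixpoint_exists _ 'cV[R]_(n + n) F X _ _ _ F_X
  (@mx_norm_le_enorm _ _) (ler0n _ _) (@enorm_le_mx_norm _ _) beta_KL F_stable
  _ _ X_closed Xx0 orbitM.
exists xs, (y - lstm_g L xs); split.
  by split; [exact: Xxs | exact: esym Fxs | rewrite addrC subrK].
move=> x' d' Xx' Fx' ->.
have -> := @stable_fixpoint_unique _ 'cV[R]_(n + n) F X _ _
  (@mx_norm_le_enorm _ _) beta_KL F_stable _ _ Xx' Xxs (esym Fx') Fxs.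
by split; last rewrite addrC addKr.
Qed.
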